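(* Let $G$ be a graph, $k\ge1$, and $S,T$ independent sets of $G$ of size $k$. Let $\mathcal{F}$ be the family obtained from an independence covering family for $(G,k)$ by removing all members of size less than $k$ and adding $S$ and $T$. Let $\mathcal{G}$ be the graph with vertex set $\mathcal{F}$ in which distinct $I,I'\in\mathcal{F}$ are adjacent iff $|I\cap I'|\ge k-1$. If there is a token jumping reconfiguration sequence $S=I_0,I_1,\dots,I_m=T$ in $G$, then there is a path from $S$ to $T$ in $\mathcal{G}$.
   Context: An independence covering family for $(G,k)$ is a family of independent sets of $G$ such that every independent set of $G$ of size at most $k$ is a subset of some member. A token jumping reconfiguration sequence from $S$ to $T$ is a finite sequence $S=I_0,\dots,I_m=T$ of independent sets of $G$ of size $k$ with each $I_{j+1}=(I_j\setminus\{u\})\cup\{v\}$ for some $u\in I_j$, $v\in V(G)\setminus I_j$. *)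

From mathcomp Require Import all_boot.
Set Implicit Arguments. Unset Strict Implicit. Unset Printing Implicit Defensive.

Section Defs.
Variables (V : finType) (e : rel V).

Definition independent (I : {set V}) : bool :=
  [forall x in I, forall y in I, ~~ e x y].

Definition indep_covering_family (k : nat) (F : {set {set V}}) : Prop :=
  (forall I, I \in F -> independent I) /\
  (forall J, independent J -> #|J| <= k -> exists2 I, I \in F & J \subset I).

Definition tj_step (I J : {set V}) : bool :=
  [exists u in I, exists v in ~: I, J == (I :\ u) :|: [set v]].

(* s = [:: I_1; ...; I_m] such that S = I_0, I_1, ..., I_m = T is a token
   jumping reconfiguration sequence of independent sets of size k. *)
Definition tj_sequence (k : nat) (S T : {set V}) (s : seq {set V}) : bool :=
  all (fun I => independent I && (#|I| == k)) (S :: s)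
  && path tj_step S s && (last S s == T).

Definition trimmed_family (k : nat) (F : {set {set V}}) (S T : {set V})
  : {set {set V}} :=
  [set I in F | k <= #|I|] :|: [set S; T].

Definition fam_adj (k : nat) (Fam : {set {set V}}) : rel {set V} :=
  fun I J => [&& I \in Fam, J \in Fam, I != J & k.-1 <= #|I :&: J|].

End Defs.

From mathcomp Require Import all_boot.
Set Implicit Arguments. Unset Strict Implicit. Unset Printing Implicit Defensive.

(* Cover every set of the reconfiguration sequence by a member of the family
   of size at least k (the covering family provides one, since each set is
   independent of size k; S and T cover themselves).  A token jump keeps k - 1
   tokens in place, so the covers of two consecutive sets share at least
   k - 1 vertices and are adjacent or equal; chaining these adjacencies gives
   the path. *)

Lemma tj_step_cardI (V : finType) (I J : {set V}) :
  tj_step I J -> #|I|.-1 <= #|I :&: J|.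
Proof.
case/existsP=> u /andP[uI /existsP[v /andP[_ /eqP ->]]].
rewrite (cardsD1 u I) uI /= subset_leq_card // subsetI subsetDl.
exact: subsetUl.
Qed.

Section FamilyReachability.
Variables (V : finType) (k : nat) (Fam : {set {set V}}).

Definition fam_reachable (X Y : {set V}) : Prop :=
  exists2 p : seq {set V}, path (fam_adj k Fam) X p & last X p = Y.

Lemma fam_reachable_trans X Y Z :
  fam_reachable X Y -> fam_reachable Y Z -> fam_reachable X Z.
Proof.
move=> [p pX <-] [q qY <-]; exists (p ++ q); last by rewrite last_cat.
by rewrite cat_path pX.
Qed.

Lemma fam_reachable_overlap X Y :
  X \in Fam -> Y \in Fam -> k.-1 <= #|X :&: Y| -> fam_reachable X Y.
Proof.
move=> XF YF overlap; have [->|neXY] := eqVneq X Y; first by exists [::].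
by exists [:: Y]; rewrite //= andbT /fam_adj XF YF neXY.
Qed.

Lemma fam_reachable_tj_path (I : {set V}) (s : seq {set V}) (C X : {set V}) :
  all (fun J : {set V} => #|J| == k) (I :: s) -> path (@tj_step V) I s ->
  {in s, forall J : {set V}, exists2 D, D \in Fam & J \subset D} ->
  C \in Fam -> I \subset C -> X \in Fam -> last I s \subset X ->
  fam_reachable C X.
Proof.
elim: s I C => [|J s IHs] I C /=.
  move=> /andP[/eqP cardI _] _ _ CF IC XF IX; apply: fam_reachable_overlap => //.
  by rewrite -cardI (leq_trans (leq_pred _)) ?subset_leq_card // subsetI IC.
move=> /andP[/eqP cardI sizes] /andP[stepIJ pathJ] covers CF IC XF lastX.
have [D DF JD] := covers J (mem_head J s).
apply: (fam_reachable_trans (Y := D)).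
  apply: fam_reachable_overlap => //; rewrite -cardI.
  by rewrite (leq_trans (tj_step_cardI stepIJ)) ?subset_leq_card ?setISS.
apply: IHs sizes pathJ _ DF JD XF lastX => K Ks.
by apply: covers; rewrite inE Ks orbT.
Qed.

End FamilyReachability.

Section TrimmedFamily.
Variables (V : finType) (e : rel V) (k : nat) (F : {set {set V}}) (S T : {set V}).

Lemma trimmed_familyS : S \in trimmed_family k F S T.
Proof. by rewrite !inE eqxx orbT. Qed.

Lemma trimmed_familyT : T \in trimmed_family k F S T.
Proof. by rewrite !inE eqxx !orbT. Qed.

Lemma trimmed_family_cover J :
  indep_covering_family e k F -> independent e J -> #|J| = k ->
  exists2 D, D \in trimmed_family k F S T & J \subset D.
Proof.
move=> [_ coverF] indJ cardJ; have [D DF JD] := coverF J indJ (eq_leq cardJ).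
by exists D; rewrite // !inE DF -cardJ subset_leq_card.
Qed.

End TrimmedFamily.

Theorem lemma7p2 (V : finType) (e : rel V)
  (e_sym : symmetric e) (e_irr : irreflexive e)
  (k : nat) (hk : 1 <= k) (S T : {set V})
  (hS : independent e S) (hSk : #|S| = k)
  (hT : independent e T) (hTk : #|T| = k)
  (F : {set {set V}}) (hF : indep_covering_family e k F) :
  (exists s : seq {set V}, tj_sequence e k S T s) ->
  exists p : seq {set V},
    path (fam_adj k (trimmed_family k F S T)) S p /\ last S p = T.
Proof.
case=> s /andP[/andP[good_sets tj_path] /eqP lastT].
suff [p pS pT] : fam_reachable k (trimmed_family k F S T) S T by exists p.
apply: (fam_reachable_tj_path _ tj_path _ (trimmed_familyS _ _ _ _) (subxx S)
          (trimmed_familyT _ _ _ _)); last by rewrite lastT.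
- by apply: sub_all good_sets => J /andP[].
- move=> J Js; have /andP[indJ /eqP cardJ] : independent e J && (#|J| == k).
    by apply: (allP good_sets); rewrite inE Js orbT.
  exact: trimmed_family_cover hF indJ cardJ.
Qed.
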